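(* Let $(S_n^{(1)},S_n^{(2)})_{n\ge0}$ be a two-elephant walking model with $\alpha_1\alpha_2\ne0$ and $\lambda_\alpha\ne\pm1$. Then for every $n\ge1$, $$x_n=\beta_n(\lambda_\alpha)\Big(x_1+\sum_{j=1}^{n-1}\frac{\gamma_j(\lambda_\alpha)}{\beta_{j+1}(\lambda_\alpha)}\varepsilon^{(x)}_{j+1}\Big),\qquad y_n=\beta_n(-\lambda_\alpha)\Big(y_1+\sum_{j=1}^{n-1}\frac{\gamma_j(-\lambda_\alpha)}{\beta_{j+1}(-\lambda_\alpha)}\varepsilon^{(y)}_{j+1}\Big),$$ and $(\varepsilon^{(x)}_{j+1})_{j\ge1}$, $(\varepsilon^{(y)}_{j+1})_{j\ge1}$ are martingale difference sequences with respect to $(\mathcal F_{j+1})_{j\ge1}$.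
   Context: Two-elephant walking model: fix $p_1,p_2\in[0,1]$, $\alpha_i=2p_i-1$. Let $(\xi_n^{(1)})_{n\ge2}$ be i.i.d. Bernoulli($p_1$), $(\xi_n^{(2)})_{n\ge2}$ i.i.d. Bernoulli($p_2$), $(u_n^{(1)})_{n\ge1}$, $(u_n^{(2)})_{n\ge1}$ independent with $u_n^{(i)}$ uniform on $\{1,\dots,n\}$, all mutually independent. $S_0^{(i)}=0$, $X_1^{(1)},X_1^{(2)}\in\{-1,1\}$ given, and for $n\ge1$: $X_{n+1}^{(1)}:=(2\xi^{(1)}_{n+1}-1)X^{(2)}_{u_n^{(2)}}$, $X_{n+1}^{(2)}:=(2\xi^{(2)}_{n+1}-1)X^{(1)}_{u_n^{(1)}}$, $S_n^{(i)}=\sum_{k\le n}X_k^{(i)}$; $\mathcal F_n:=\sigma(X_j^{(i)}:1\le j\le n,\ i=1,2)$. Notation: $\lambda_\alpha:=\operatorname{sgn}(\alpha_2)\sqrt{\alpha_1\alpha_2}$ if $\alpha_1\alpha_2>0$ and $\lambda_\alpha:=\mathrm i\operatorname{sgn}(\alpha_2)\sqrt{-\alpha_1\alpha_2}$ if $\alpha_1\alpha_2<0$; $r_\alpha:=\sqrt{\alpha_1/\alpha_2}$ if $\alpha_1\alpha_2>0$ and $r_\alpha:=\mathrm i\sqrt{-\alpha_1/\alpha_2}$ if $\alpha_1\alpha_2<0$. For $n\ge1$: $\gamma_n(\pm\lambda_\alpha):=\frac{1\pm\lambda_\alpha}{n+1}$, $\beta_n(\pm\lambda_\alpha):=\prod_{k=1}^{n-1}(1-\gamma_k(\pm\lambda_\alpha))=\frac{\Gamma(n\mp\lambda_\alpha)}{\Gamma(1\mp\lambda_\alpha)\Gamma(n+1)}$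 (with $\beta_1=1$); $x_n:=\frac{S_n^{(1)}-r_\alpha S_n^{(2)}}{n}$, $y_n:=\frac{S_n^{(1)}+r_\alpha S_n^{(2)}}{n}$; and for $j\ge1$ $$\varepsilon^{(x)}_{j+1}:=\frac{1}{1+\lambda_\alpha}\big(X^{(1)}_{j+1}-r_\alpha X^{(2)}_{j+1}+\lambda_\alpha x_j\big),\qquad \varepsilon^{(y)}_{j+1}:=\frac{1}{1-\lambda_\alpha}\big(X^{(1)}_{j+1}+r_\alpha X^{(2)}_{j+1}-\lambda_\alpha y_j\big).$$ *)

From HB Require Import structures.
From mathcomp Require Import all_boot all_order all_algebra.
From mathcomp Require Import all_classical all_reals all_analysis.
From mathcomp Require Import complex.

Set Implicit Arguments.
Unset Strict Implicit.
Unset Printing Implicit Defensive.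

Import Order.TTheory GRing.Theory Num.Theory.
Local Open Scope classical_set_scope.
Local Open Scope ring_scope.

Definition alpha {R : realType} (p : R) : R := 2 * p - 1.

Definition lambda_a {R : realType} (a1 a2 : R) : R[i] :=
  if 0 < a1 * a2 then Complex (Num.sg a2 * Num.sqrt (a1 * a2)) 0
  else Complex 0 (Num.sg a2 * Num.sqrt (- (a1 * a2))).

(* r_alpha (complex) ; only meaningful when a1 * a2 != 0 *)
Definition r_a {R : realType} (a1 a2 : R) : R[i] :=
  if 0 < a1 * a2 then Complex (Num.sqrt (a1 / a2)) 0
  else Complex 0 (Num.sqrt (- (a1 / a2))).

Definition gam {R : realType} (n : nat) (z : R[i]) : R[i] := (1 + z) / (n.+1)%:R.

Definition bet {R : realType} (n : nat) (z : R[i]) : R[i] :=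
  \prod_(1 <= k < n) (1 - gam k z).

Definition sgnb (b : bool) : int := if b then 1 else -1.

(* walk a b xi1 xi2 u1 u2 n = [:: (X_1^(1), X_1^(2)); ...; (X_n^(1), X_n^(2))]
   with X_1^(1) = a, X_1^(2) = b and, for m >= 1,
   X_{m+1}^(1) = (2 xi^(1)_{m+1} - 1) X^(2)_{u^(2)_m},
   X_{m+1}^(2) = (2 xi^(2)_{m+1} - 1) X^(1)_{u^(1)_m}.
   (X_k is stored at position k-1.) *)
Fixpoint walk (a b : int) (xi1 xi2 : nat -> bool) (u1 u2 : nat -> nat)
    (n : nat) : seq (int * int) :=
  match n with
  | 0 => [::]
  | 1 => [:: (a, b)]
  | (m.+1) as n' =>
      let s := walk a b xi1 xi2 u1 u2 m in
      rcons s ((sgnb (xi1 n') * (nth (0, 0) s (u2 m).-1).2)%R,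
               (sgnb (xi2 n') * (nth (0, 0) s (u1 m).-1).1)%R)
  end.

Section Model.
Context {R : realType} {d : measure_display} {T : measurableType d}.
Variables (a b : int) (Xi1 Xi2 : nat -> T -> bool) (U1 U2 : nat -> T -> nat).

Definition Xs (n : nat) (w : T) : seq (int * int) :=
  walk a b (fun k => Xi1 k w) (fun k => Xi2 k w)
           (fun k => U1 k w) (fun k => U2 k w) n.

Definition X1 (k : nat) (w : T) : int := (nth (0, 0) (Xs k w) k.-1).1.
Definition X2 (k : nat) (w : T) : int := (nth (0, 0) (Xs k w) k.-1).2.

Definition S1 (n : nat) (w : T) : int := \sum_(1 <= k < n.+1) X1 k w.
Definition S2 (n : nat) (w : T) : int := \sum_(1 <= k < n.+1) X2 k w.

(* the natural filtration F_n = sigma(X_j^(i) : 1 <= j <= n, i = 1,2):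
   since the generating vector takes values in a countable set (with the
   discrete sigma-algebra), F_n is the family of its preimages. *)
Definition filtr (n : nat) : set (set T) :=
  [set A | exists B : set (seq (int * int)), A = Xs n @^-1` B].

Variables (lam r : R[i]).

Definition xn (n : nat) (w : T) : R[i] :=
  ((S1 n w)%:~R - r * (S2 n w)%:~R) / n%:R.
Definition yn (n : nat) (w : T) : R[i] :=
  ((S1 n w)%:~R + r * (S2 n w)%:~R) / n%:R.

(* epsx k = eps^(x)_k, meaningful for k = j + 1 with j >= 1 *)
Definition epsx (k : nat) (w : T) : R[i] :=
  ((X1 k w)%:~R - r * (X2 k w)%:~R + lam * xn k.-1 w) / (1 + lam).
Definition epsy (k : nat) (w : T) : R[i] :=
  ((X1 k w)%:~R + r * (X2 k w)%:~R - lam * yn k.-1 w) / (1 - lam).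

End Model.

(* indices of the driving variables: XiI i n = xi^(i)_n, UI i n = u^(i)_n
   (false = elephant 1, true = elephant 2) *)
Inductive elIdx := XiI of bool & nat | UI of bool & nat.

Definition elValid (i : elIdx) : Prop :=
  match i with XiI _ n => (2 <= n)%N | UI _ n => (1 <= n)%N end.

Definition elFam {T : Type} (Xi1 Xi2 : nat -> T -> bool) (U1 U2 : nat -> T -> nat)
  (i : elIdx) (w : T) : nat :=
  match i with
  | XiI false n => nat_of_bool (Xi1 n w)
  | XiI true n => nat_of_bool (Xi2 n w)
  | UI false n => U1 n w
  | UI true n => U2 n w
  end.

Definition mutually_independent_nat {R : realType} {d : measure_display}
  {T : measurableType d} (P : probability T R) {I : Type} (V : I -> Prop)
  (Y : I -> T -> nat) : Prop :=
  forall (m : nat) (f : 'I_m -> I), injective f -> (forall k, V (f k)) ->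
  forall v : 'I_m -> nat,
    P [set w | forall k, Y (f k) w = v k] =
    (\prod_(k < m) P [set w | Y (f k) w = v k])%E.

(* (eps_{j+1})_{j >= 1} is a (complex-valued) martingale difference sequence
   w.r.t. (F_{j+1})_{j >= 1}: eps_{j+1} is F_{j+1}-measurable (real and
   imaginary parts), integrable, and E[eps_{j+1} | F_j] = 0, i.e. its
   integral over every F_j-set vanishes. *)
Definition mds_from1 {R : realType} {d : measure_display} {T : measurableType d}
  (P : probability T R) (F : nat -> set (set T)) (eps : nat -> T -> R[i]) : Prop :=
  forall j : nat, (1 <= j)%N ->
    [/\ forall B : set R, measurable B ->
          F j.+1 [set w | complex.Re (eps j.+1 w) \in B] /\
          F j.+1 [set w | complex.Im (eps j.+1 w) \in B],
        P.-integrable setT (fun w => (complex.Re (eps j.+1 w))%:E),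
        P.-integrable setT (fun w => (complex.Im (eps j.+1 w))%:E)
      & forall A, F j A ->
          (\int[P]_(w in A) (complex.Re (eps j.+1 w))%:E = 0)%E /\
          (\int[P]_(w in A) (complex.Im (eps j.+1 w))%:E = 0)%E].

From HB Require Import structures.
From mathcomp Require Import all_boot all_order all_algebra.
From mathcomp Require Import all_classical all_reals all_analysis.
From mathcomp Require Import complex.
From mathcomp Require Import ring lra zify.
From mathcomp Require Import measurable_realfun.

(* Since S_(n+1) = S_n + X_(n+1), the definitions of eps^(x) and eps^(y) say exactly
   that x_n and y_n solve u_(n+1) = (1 - gamma_n(z)) u_n + gamma_n(z) eps_(n+1) with
   z = lambda resp. -lambda, and the stated formulas are the solutions of this linear
   recursion. The products beta_n(z) do not vanish since z is no positive integer:
   z^2 = alpha_1 alpha_2 <= 1 and z <> 1.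
   Each eps_(j+1) is c1 X1_(j+1) + c2 X2_(j+1) + c3 S1_j + c4 S2_j for constants c_i.
   Given the first j steps, X1_(j+1) = +-X2_(u) has mean alpha_1 S2_j / j and X2_(j+1)
   has mean alpha_2 S1_j / j, and the relations lambda r = alpha_1 and r alpha_2 = lambda
   make the conditional mean of eps_(j+1) vanish. As the walk up to time j+1 is a function
   of finitely many independent discrete driving variables, these conditional
   expectations are finite iterated sums against the laws of the drivers. *)

Set Implicit Arguments.
Unset Strict Implicit.
Unset Printing Implicit Defensive.

Import Order.TTheory GRing.Theory Num.Theory.
Local Open Scope classical_set_scope.
Local Open Scope complex_scope.
Local Open Scope ring_scope.

Section Walk.
Variables (a b : int) (xi1 xi2 : nat -> bool) (u1 u2 : nat -> nat).
Local Notation W := (walk a b xi1 xi2 u1 u2).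

Lemma walkSS m : W m.+2 = rcons (W m.+1)
  ((sgnb (xi1 m.+2) * (nth (0, 0) (W m.+1) (u2 m.+1).-1).2)%R,
   (sgnb (xi2 m.+2) * (nth (0, 0) (W m.+1) (u1 m.+1).-1).1)%R).
Proof. by []. Qed.

Lemma size_walk n : size (W n) = n.
Proof. by elim: n => [|[|m] IH] //; rewrite walkSS size_rcons IH. Qed.

Lemma walk_take m n : (m <= n)%N -> W m = take m (W n).
Proof.
elim: n => [|n IH]; first by rewrite leqn0 => /eqP ->.
rewrite leq_eqVlt => /orP[/eqP ->|]; first by rewrite take_oversize // size_walk.
rewrite ltnS => hm; rewrite (IH hm); case: n IH hm => [|n] _.
  by rewrite leqn0 => /eqP ->.
by move=> hm; rewrite walkSS -cats1 takel_cat // size_walk.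
Qed.

Lemma nth_walk m n k : (k < m <= n)%N -> nth (0, 0) (W m) k = nth (0, 0) (W n) k.
Proof. by case/andP=> km mn; rewrite (walk_take mn) nth_take. Qed.

End Walk.

Lemma eq_walk (a b : int) xi1 xi2 u1 u2 xi1' xi2' u1' u2' m :
  (forall k, (2 <= k <= m)%N -> xi1 k = xi1' k /\ xi2 k = xi2' k) ->
  (forall k, (1 <= k < m)%N -> u1 k = u1' k /\ u2 k = u2' k) ->
  walk a b xi1 xi2 u1 u2 m = walk a b xi1' xi2' u1' u2' m.
Proof.
elim: m => [|[|m] IH] hxi hu //.
rewrite !walkSS IH; last 2 first.
- by move=> k /andP[k2 km]; apply: hxi; rewrite k2 /= (leq_trans km).
- by move=> k /andP[k1 km]; apply: hu; rewrite k1 /= (ltn_trans km).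
have [-> ->] : xi1 m.+2 = xi1' m.+2 /\ xi2 m.+2 = xi2' m.+2.
  by apply: hxi; rewrite /= leqnn.
have [-> ->] : u1 m.+1 = u1' m.+1 /\ u2 m.+1 = u2' m.+1.
  by apply: hu; rewrite /= ltnSn.
by [].
Qed.

Definition path_sum (f : int * int -> int) (z : seq (int * int)) (n : nat) : int :=
  \sum_(1 <= k < n.+1) f (nth (0, 0) z k.-1).

Lemma path_sum_rcons f z e n : (n <= size z)%N ->
  path_sum f (rcons z e) n = path_sum f z n.
Proof.
move=> hn; apply: eq_big_nat => k /andP[k1 kn].
by rewrite nth_rcons (_ : (k.-1 < size z)%N = true) //; lia.
Qed.

Lemma sqrtr_divMr (R : rcfType) (u v : R) : v != 0 ->
  Num.sqrt (u / v) * v = Num.sg v * Num.sqrt (u * v).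
Proof.
move=> v0; rewrite -[X in _ * X]mulr_sg_norm -sqrtr_sqr mulrCA; congr (_ * _).
by rewrite mulrC -sqrtrM ?sqr_ge0 //; congr Num.sqrt; field.
Qed.

Section LambdaAlpha.
Variables (R : realType) (a1 a2 : R).
Hypothesis a2_neq0 : a2 != 0.

Lemma r_aMr : r_a a1 a2 * a2%:C = lambda_a a1 a2.
Proof.
rewrite /r_a /lambda_a; case: ifP => _; simpc.
  by rewrite sqrtr_divMr // mulrC.
by rewrite -mulNr sqrtr_divMr // mulNr mulrC.
Qed.

Lemma r_a_sqr : r_a a1 a2 ^+ 2 = (a1 / a2)%:C.
Proof.
have pos_div : (0 < a1 / a2) = (0 < a1 * a2).
  have -> : a1 / a2 = a1 * a2 / a2 ^+ 2 by field.
  by rewrite pmulr_lgt0 // invr_gt0 exprn_even_gt0.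
rewrite /r_a expr2 -pos_div; case: ltP => h; simpc.
  by rewrite -expr2 sqr_sqrtr ?ltW.
by rewrite -expr2 sqr_sqrtr ?oppr_ge0 // opprK.
Qed.

Lemma lambda_a_sqr : lambda_a a1 a2 ^+ 2 = (a1 * a2)%:C.
Proof.
rewrite -r_aMr exprMn r_a_sqr -rmorphXn -rmorphM /=.
by rewrite expr2 mulrA divfK.
Qed.

Lemma lambda_aMr : lambda_a a1 a2 * r_a a1 a2 = a1%:C.
Proof.
by rewrite -r_aMr mulrAC -expr2 r_a_sqr -rmorphM /= divfK.
Qed.

End LambdaAlpha.

Section ClosedForm.
Variable R : realType.
Implicit Types (z : R[i]) (n k : nat).

Lemma bet1 z : bet 1 z = 1.
Proof. by rewrite /bet big_geq. Qed.

Lemma betS n z : (1 <= n)%N -> bet n.+1 z = bet n z * (1 - gam n z).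
Proof. by move=> n1; rewrite /bet big_nat_recr. Qed.

Lemma subr1_gam_neq0 k z : z != k%:R -> 1 - gam k z != 0.
Proof.
apply: contra; rewrite subr_eq0 => /eqP gam_k.
have : 1 + z = k.+1%:R.
  by rewrite -[1 + z](@divfK _ k.+1%:R) ?pnatr_eq0 // -/(gam k z) -gam_k mul1r.
by rewrite -natr1 addrC => /addIr ->.
Qed.

Lemma bet_neq0 n z : (forall k, (1 <= k)%N -> z != k%:R) -> bet n z != 0.
Proof.
move=> z_nat; rewrite /bet big_nat_cond; apply: (big_ind (fun x => x != 0)) => //.
- by move=> x y; apply: mulf_neq0.
- by move=> k /andP[/andP[k1 _] _]; apply/subr1_gam_neq0/z_nat.
Qed.

Lemma gam_recursion_sol (u e : nat -> R[i]) z :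
  (forall k, (1 <= k)%N -> z != k%:R) ->
  (forall n, (1 <= n)%N -> u n.+1 = (1 - gam n z) * u n + gam n z * e n.+1) ->
  forall n, (1 <= n)%N ->
  u n = bet n z * (u 1%N + \sum_(1 <= j < n) gam j z / bet j.+1 z * e j.+1).
Proof.
move=> z_nat u_rec; elim=> [//|[|n] IH] _; first by rewrite bet1 big_geq // addr0 mul1r.
have b2 : bet n.+2 z = bet n.+1 z * (1 - gam n.+1 z) by rewrite betS.
have := @bet_neq0 n.+2 z z_nat; rewrite b2 mulf_eq0 negb_or => /andP[b1 g1].
by rewrite u_rec // big_nat_recr //= IH // b2; field; rewrite b1 g1.
Qed.

Lemma sqr_le1_neq_natS (l : R[i]) (c : R) : l ^+ 2 = c%:C -> c <= 1 -> l != 1 ->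
  forall k, (1 <= k)%N -> l != k%:R.
Proof.
move=> l2 c1 l_neq1 [//|[//|k]] _; apply/eqP => l_nat; move: l2.
rewrite l_nat -(rmorph_nat (real_complex R)) -rmorphXn => /complexI c_nat.
have : (2 : R) <= k.+2%:R by rewrite ler_nat.
by rewrite -c_nat in c1; nra.
Qed.

End ClosedForm.

Section Recursion.
Variables (R : realType) (d : measure_display) (T : measurableType d).
Variables (a b : int) (Xi1 Xi2 : nat -> T -> bool) (U1 U2 : nat -> T -> nat).
Variables (lam r : R[i]).
Local Notation S1 := (S1 a b Xi1 Xi2 U1 U2).
Local Notation S2 := (S2 a b Xi1 Xi2 U1 U2).
Local Notation X1 := (X1 a b Xi1 Xi2 U1 U2).
Local Notation X2 := (X2 a b Xi1 Xi2 U1 U2).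
Local Notation xn := (xn a b Xi1 Xi2 U1 U2 r).
Local Notation yn := (yn a b Xi1 Xi2 U1 U2 r).

Lemma S1S n w : S1 n.+1 w = (S1 n w + X1 n.+1 w)%R.
Proof. by rewrite /S1 big_nat_recr. Qed.

Lemma S2S n w : S2 n.+1 w = (S2 n w + X2 n.+1 w)%R.
Proof. by rewrite /S2 big_nat_recr. Qed.

Lemma xn_rec n w : (1 <= n)%N -> 1 + lam != 0 ->
  xn n.+1 w = (1 - gam n lam) * xn n w
              + gam n lam * epsx a b Xi1 Xi2 U1 U2 lam r n.+1 w.
Proof.
move=> n1 lam1; rewrite /xn /epsx /gam /= S1S S2S !intrD /xn.
by field; rewrite lam1 pnatr_eq0 -lt0n n1 nat1r pnatr_eq0.
Qed.

Lemma yn_rec n w : (1 <= n)%N -> 1 - lam != 0 ->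
  yn n.+1 w = (1 - gam n (- lam)) * yn n w
              + gam n (- lam) * epsy a b Xi1 Xi2 U1 U2 lam r n.+1 w.
Proof.
move=> n1 lam1; rewrite /yn /epsy /gam /= S1S S2S !intrD /yn.
by field; rewrite lam1 pnatr_eq0 -lt0n n1 nat1r pnatr_eq0.
Qed.

End Recursion.

Fixpoint seqs_below (N n : nat) : seq (seq nat) :=
  if n is n'.+1 then [seq x :: s | x <- iota 0 N, s <- seqs_below N n']
  else [:: [::]].

Lemma size_seqs_below N n s : s \in seqs_below N n -> size s = n.
Proof.
elim: n s => [|n IH] s /=; first by rewrite inE => /eqP ->.
by case/allpairsP => -[x t] /= [_ ht ->] /=; rewrite IH.
Qed.

Lemma uniq_seqs_below N n : uniq (seqs_below N n).
Proof.
elim: n => [//|n IH] /=; apply: allpairs_uniq => //; first exact: iota_uniq.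
by move=> [x s] [y t] _ _ /= [-> ->].
Qed.

Section IteratedExpectation.
Variables (R : realType) (I : eqType) (pi : I -> nat -> R) (N : nat).

(* The expectation of G under the product of the weights pi i, i in l, each restricted
   to [0, N), computed one coordinate at a time. *)
Fixpoint iter_expect (l : seq I) (G : seq nat -> R) : R :=
  if l is i :: l' then
    \sum_(x < N) pi i x * iter_expect l' (fun s => G (nat_of_ord x :: s))
  else G [::].

Lemma iter_expect_cat l1 l2 G : iter_expect (l1 ++ l2) G =
  iter_expect l1 (fun s1 => iter_expect l2 (fun s2 => G (s1 ++ s2))).
Proof. by elim: l1 G => [//|i l1 IH] G /=; apply: eq_bigr => x _; rewrite IH. Qed.

Lemma eq_iter_expect l G G' : (forall s, size s = size l -> G s = G' s) ->
  iter_expect l G = iter_expect l G'.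
Proof.
elim: l G G' => [|i l IH] G G' eqG /=; first exact: eqG.
apply: eq_bigr => x _; congr (_ * _).
by apply: IH => s hs; apply: eqG; rewrite /= hs.
Qed.

Lemma iter_expect0 l : iter_expect l (fun _ => 0) = 0.
Proof.
elim: l => [//|i l IH] /=.
by rewrite big1 // => x _; rewrite (_ : iter_expect l _ = 0) ?mulr0.
Qed.

Lemma iter_expect_cst l c : (forall i, i \in l -> \sum_(x < N) pi i x = 1) ->
  iter_expect l (fun _ => c) = c.
Proof.
elim: l => [//|i l IH] pi1 /=.
rewrite IH => [|j jl]; last by apply: pi1; rewrite inE jl orbT.
by rewrite -mulr_suml pi1 ?mem_head // mul1r.
Qed.

Lemma iter_expectE l G : iter_expect l G =
  \sum_(s <- seqs_below N (size l))
    G s * \prod_(k < size l) pi (tnth (in_tuple l) k) (nth 0%N s k).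
Proof.
elim: l G => [|i l IH] G /=; first by rewrite big_seq1 big_ord0 mulr1.
have -> : iota 0 N = index_iota 0 N by rewrite /index_iota subn0.
rewrite big_allpairs_dep /= big_mkord.
apply: eq_bigr => x _; rewrite IH big_distrr /=; apply: eq_bigr => s _.
rewrite big_ord_recl /= mulrCA; congr (_ * (_ * _)).
by apply: eq_bigr => k _; rewrite !(tnth_nth i).
Qed.

End IteratedExpectation.

Lemma measurable_preimage_countable d (T : measurableType d) (C : countType)
  (Z : T -> C) : (forall c, measurable [set w | Z w = c]) ->
  forall S : set C, measurable (Z @^-1` S).
Proof.
move=> mZ S.
have -> : Z @^-1` S = \bigcup_(c in [set: C]) ([set w | Z w = c] `&` [set _ | S c]).
  by apply/seteqP; split => [w Sw|w [c _ [/= <- //]]]; exists (Z w).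
apply: countable_bigcupT_measurable => // c.
have [Sc|nSc] := pselect (S c).
  by rewrite (_ : [set _ | S c] = setT) ?setIT //; apply/seteqP; split.
by rewrite (_ : [set _ | S c] = set0) ?setI0 //; apply/seteqP; split.
Qed.

Section DiscreteIndependence.
Local Open Scope ereal_scope.
Variables (R : realType) (d : measure_display) (T : measurableType d).
Variables (P : probability T R) (I : eqType) (V : I -> Prop) (Y : I -> T -> nat).
Hypothesis measurable_Y : forall i x, V i -> measurable [set w | Y i w = x].
Hypothesis Y_indep : mutually_independent_nat P V Y.

Definition Yseq (l : seq I) (w : T) : seq nat := map (Y ^~ w) l.
Definition pmf_of (i : I) (x : nat) : R := fine (P [set w | Y i w = x]).

Variable l : seq I.
Hypothesis l_uniq : uniq l.
Hypothesis l_valid : forall i, i \in l -> V i.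

Lemma measurable_Yseq_eq s : measurable [set w | Yseq l w = s].
Proof.
elim: l l_valid s => [|i l' IH] valid [|x s].
- by rewrite (_ : [set _ | _] = setT) //; apply/seteqP; split.
- by rewrite (_ : [set _ | _] = set0) //; apply/seteqP; split.
- by rewrite (_ : [set _ | _] = set0) //; apply/seteqP; split.
rewrite (_ : [set _ | _] = [set w | Y i w = x] `&` [set w | Yseq l' w = s]).
  apply: measurableI; first by apply/measurable_Y/valid; rewrite mem_head.
  by apply: IH => j jl'; apply: valid; rewrite inE jl' orbT.
by apply/seteqP; split => w /= [-> ->].
Qed.

Lemma measurable_fun_Yseq (G : seq nat -> R) :
  measurable_fun [set: T] (EFin \o (G \o Yseq l)).
Proof.
move=> _ B mB; rewrite setTI.
have -> : (EFin \o (G \o Yseq l)) @^-1` B = Yseq l @^-1` [set s | B (G s)%:E] by [].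
exact: measurable_preimage_countable measurable_Yseq_eq _.
Qed.

Lemma prob_Yseq_eq s : size s = size l ->
  P [set w | Yseq l w = s] =
  (\prod_(k < size l) pmf_of (tnth (in_tuple l) k) (nth 0%N s k))%:E.
Proof.
move=> size_s.
have -> : [set w | Yseq l w = s] =
    [set w | forall k, Y (tnth (in_tuple l) k) w = nth 0%N s k].
  apply/seteqP; split => w /= => [<- k|Ys].
    have x0 := tnth (in_tuple l) k.
    by rewrite (nth_map x0) // (tnth_nth x0).
  apply: (@eq_from_nth _ 0%N); first by rewrite size_map.
  move=> k; rewrite size_map => kl; have x0 := tnth (in_tuple l) (Ordinal kl).
  by rewrite (nth_map x0) // -(Ys (Ordinal kl)) (tnth_nth x0).
rewrite Y_indep; [|exact/tuple_uniqP|by move=> k; apply/l_valid/mem_tnth].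
rewrite -prodEFin; apply: eq_bigr => k _.
by rewrite /pmf_of fineK // fin_num_measure //; apply/measurable_Y/l_valid/mem_tnth.
Qed.

Variable N : nat.
Hypothesis pmf_sum1 : forall i, i \in l -> (\sum_(x < N) pmf_of i x = 1)%R.

Let support := \big[setU/set0]_(s <- seqs_below N (size l)) [set w | Yseq l w = s].

Let measurable_support : measurable support.
Proof. by apply: bigsetU_measurable => s _; apply: measurable_Yseq_eq. Qed.

Lemma integral_Yseq_support G :
  \int[P]_(w in support) (G (Yseq l w))%:E = (iter_expect pmf_of N l G)%:E.
Proof.
have disj : trivIset [set` seqs_below N (size l)] (fun s => [set w | Yseq l w = s]).
  apply/trivIsetP => s t _ _ st; apply/seteqP; split => // w [/= Ys Yt].
  by move: st; rewrite -Ys -Yt eqxx.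
rewrite (integral_bigsetU_EFin _ measurable_Yseq_eq (uniq_seqs_below _ _) disj);
  last exact/(measurable_funS measurableT)/measurable_fun_Yseq.
rewrite iter_expectE -sumEFin big_seq [RHS]big_seq; apply: eq_bigr => s hs.
rewrite (eq_integral (cst (G s)%:E)); last by move=> w; rewrite inE /= => ->.
rewrite integral_cst; last exact: measurable_Yseq_eq.
by rewrite EFinM /= prob_Yseq_eq // (size_seqs_below hs).
Qed.

Let prob_support_compl : P (~` support) = 0.
Proof.
have := integral_Yseq_support (fun _ => 1%R); rewrite iter_expect_cst //.
rewrite (eq_integral (cst 1%:E)) // integral_cst // mul1e.
by rewrite probability_setC // => ->; rewrite subee.
Qed.

Lemma integral_Yseq G :
  \int[P]_w (G (Yseq l w))%:E = (iter_expect pmf_of N l G)%:E.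
Proof.
have mG := measurable_funS measurableT (subsetT _) (measurable_fun_Yseq G).
rewrite -(setUv support) integral_setU //; last 2 first.
- exact: measurableC.
- by rewrite /disj_set setICr.
rewrite integral_Yseq_support null_set_integral ?adde0 //; exact: measurableC.
Qed.

End DiscreteIndependence.

Definition elIdx_code (i : elIdx) : bool * bool * nat :=
  match i with XiI c n => (true, c, n) | UI c n => (false, c, n) end.
Definition elIdx_decode (x : bool * bool * nat) : elIdx :=
  let: (t, c, n) := x in if t then XiI c n else UI c n.
Lemma elIdx_codeK : cancel elIdx_code elIdx_decode. Proof. by case. Qed.
HB.instance Definition _ := Equality.copy elIdx (can_type elIdx_codeK).

Section Drivers.
Local Open Scope nat_scope.

Definition step_drivers m :=
  [:: XiI false m.+2; XiI true m.+2; UI false m.+1; UI true m.+1].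

Fixpoint drivers_upto m :=
  if m is m'.+1 then drivers_upto m' ++ step_drivers m' else [::].

Lemma size_drivers_upto m : size (drivers_upto m) = 4 * m.
Proof. by elim: m => [//|m IH] /=; rewrite size_cat IH /=; lia. Qed.

Lemma nth_drivers_upto m k c : k < m -> c < 4 ->
  nth (XiI false 0) (drivers_upto m) (4 * k + c) =
  nth (XiI false 0) (step_drivers k) c.
Proof.
elim: m => [//|m IH] km c4 /=; rewrite nth_cat size_drivers_upto.
case: (ltngtP k m) => [{}km|mk|->]; [|lia|by rewrite ltnNge leq_addr /= addKn].
by rewrite (_ : 4 * k + c < 4 * m) ?IH //; lia.
Qed.

Lemma mem_drivers_upto m i : i \in drivers_upto m ->
  match i with XiI _ n => 2 <= n <= m.+1 | UI _ n => 1 <= n <= m end.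
Proof.
elim: m i => [//|m IH] i /=; rewrite mem_cat => /orP[/IH|].
  by case: i => [c n|c n] /= /andP[-> ?]; lia.
by rewrite !inE => /or4P[] /eqP -> /=; lia.
Qed.

Lemma valid_drivers_upto m i : i \in drivers_upto m -> elValid i.
Proof. by move/mem_drivers_upto; case: i => [c n|c n] /= /andP[]. Qed.

Lemma uniq_drivers_upto m : uniq (drivers_upto m).
Proof.
elim: m => [//|m IH] /=; rewrite cat_uniq IH andTb; apply/andP; split=> //.
apply/hasPn => i; rewrite !inE => /or4P[] /eqP ->.
all: by apply/negP => /mem_drivers_upto /=; lia.
Qed.

End Drivers.

Section Decoding.
Local Open Scope nat_scope.
Variables (a b : int).

(* The walk read off a sequence of driver values laid out as in drivers_upto. *)
Definition decode_walk m (s : seq nat) :=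
  walk a b
    (fun k => nth 0 s (4 * (k - 2)) == 1) (fun k => nth 0 s (4 * (k - 2) + 1) == 1)
    (fun k => nth 0 s (4 * (k - 1) + 2)) (fun k => nth 0 s (4 * (k - 1) + 3)) m.

Lemma decode_walk_cat j s1 s2 : size s1 = 4 * j ->
  decode_walk j.+1 (s1 ++ s2) = decode_walk j.+1 s1.
Proof.
by move=> s1j; apply: eq_walk => k ?; rewrite !nth_cat s1j; split; case: ifP => //; lia.
Qed.

Lemma decode_walk_step j s1 x1 x2 x3 x4 : size s1 = 4 * j ->
  decode_walk j.+2 (s1 ++ [:: x1; x2; x3; x4]) = rcons (decode_walk j.+1 s1)
   ((sgnb (x1 == 1) * (nth (0, 0) (decode_walk j.+1 s1) x4.-1).2)%R,
    (sgnb (x2 == 1) * (nth (0, 0) (decode_walk j.+1 s1) x3.-1).1)%R).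
Proof.
move=> s1j; rewrite /decode_walk walkSS -/(decode_walk j.+1 _) decode_walk_cat //.
by rewrite !subSS !subn0 !nth_cat s1j ltnn subnn !ltnNge !leq_addr /= !addKn.
Qed.

End Decoding.

Section WeightedSums.
Context {R : realType}.
Implicit Types (p u v : R) (N n : nat).

Definition bit_pmf p (x : nat) : R :=
  if x == 1%N then p else if x == 0%N then 1 - p else 0.

Definition unif_pmf n (x : nat) : R := if (1 <= x <= n)%N then n%:R^-1 else 0.

Lemma sum_bit_pmf N p (f : nat -> R) : (2 <= N)%N ->
  \sum_(x < N) bit_pmf p x * f x = (1 - p) * f 0%N + p * f 1%N.
Proof.
case: N => [|[|N]] // _; rewrite !big_ord_recl big1 ?addr0 // => i _.
by rewrite /bit_pmf /bump /= mul0r.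
Qed.

Lemma sum_unif_pmf N n (f : nat -> R) : (1 <= n < N)%N ->
  \sum_(x < N) unif_pmf n x * f x = n%:R^-1 * \sum_(1 <= x < n.+1) f x.
Proof.
case/andP=> n1 nN; rewrite -(big_mkord xpredT (fun x => unif_pmf n x * f x)).
rewrite (big_cat_nat (n := n.+1)) // big_ltn // /= mul0r add0r.
rewrite [X in _ + X]big1_seq ?addr0; last first.
  move=> x /andP[_]; rewrite mem_index_iota => /andP[nx _].
  by rewrite /unif_pmf (leqNgt x) nx andbF mul0r.
rewrite mulr_sumr; apply: eq_big_nat => x /andP[x1 xn].
by rewrite /unif_pmf x1 -ltnS xn.
Qed.

Lemma sum_pmf_affine N (q f : nat -> R) u v : \sum_(x < N) q x = 1 ->
  \sum_(x < N) q x * (u * f x + v) = u * (\sum_(x < N) q x * f x) + v.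
Proof.
move=> q1; under eq_bigr do rewrite mulrDr.
rewrite big_split /= -mulr_suml q1 mul1r mulr_sumr; congr (_ + _).
by apply: eq_bigr => x _; rewrite mulrCA.
Qed.

Lemma sum4_pmf_products N (q1 q2 q3 q4 f1 f2 g1 g2 : nat -> R) u1 u2 C :
  \sum_(x < N) q1 x = 1 -> \sum_(x < N) q2 x = 1 ->
  \sum_(x < N) q3 x = 1 -> \sum_(x < N) q4 x = 1 ->
  \sum_(x1 < N) q1 x1 * \sum_(x2 < N) q2 x2 * \sum_(x3 < N) q3 x3 *
    \sum_(x4 < N) q4 x4 * (u1 * (f1 x1 * g2 x4) + u2 * (f2 x2 * g1 x3) + C)
  = u1 * (\sum_(x < N) q1 x * f1 x) * (\sum_(x < N) q4 x * g2 x)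
    + u2 * (\sum_(x < N) q2 x * f2 x) * (\sum_(x < N) q3 x * g1 x) + C.
Proof.
move=> q1_1 q2_1 q3_1 q4_1.
set E1 := \sum_(x < N) q1 x * f1 x; set E2 := \sum_(x < N) q2 x * f2 x.
set E3 := \sum_(x < N) q3 x * g1 x; set E4 := \sum_(x < N) q4 x * g2 x.
transitivity (\sum_(x1 < N) q1 x1 * ((u1 * E4) * f1 x1 + (u2 * E3 * E2 + C))); last first.
  by rewrite sum_pmf_affine // -/E1; ring.
apply: eq_bigr => x1 _; congr (_ * _).
transitivity (\sum_(x2 < N) q2 x2 * ((u2 * E3) * f2 x2 + (u1 * f1 x1 * E4 + C))); last first.
  by rewrite sum_pmf_affine // -/E2; ring.
apply: eq_bigr => x2 _; congr (_ * _).
transitivity (\sum_(x3 < N) q3 x3 * ((u2 * f2 x2) * g1 x3 + (u1 * f1 x1 * E4 + C))); last first.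
  by rewrite sum_pmf_affine // -/E3; ring.
apply: eq_bigr => x3 _; congr (_ * _).
transitivity (\sum_(x4 < N) q4 x4 * ((u1 * f1 x1) * g2 x4 + (u2 * (f2 x2 * g1 x3) + C))).
  by apply: eq_bigr => x4 _; congr (_ * _); ring.
by rewrite sum_pmf_affine // -/E4; ring.
Qed.

End WeightedSums.

Definition walk_form (K : pzRingType) (j : nat) (c1 c2 c3 c4 : K)
    (z : seq (int * int)) : K :=
  c1 * ((nth (0, 0) z j).1)%:~R + c2 * ((nth (0, 0) z j).2)%:~R
  + c3 * (path_sum fst z j)%:~R + c4 * (path_sum snd z j)%:~R.

Section ComplexParts.
Variable R : realType.

Lemma intr_complex (n : int) : (n%:~R : R[i]) = (n%:~R : R)%:C.
Proof. by rewrite (rmorph_int (real_complex R)). Qed.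

Lemma Re_walk_form j (c1 c2 c3 c4 : R[i]) z :
  complex.Re (walk_form j c1 c2 c3 c4 z) =
  walk_form j (complex.Re c1) (complex.Re c2) (complex.Re c3) (complex.Re c4) z.
Proof.
by case: c1 c2 c3 c4 => [? ?] [? ?] [? ?] [? ?]; rewrite /walk_form !intr_complex; simpc.
Qed.

Lemma Im_walk_form j (c1 c2 c3 c4 : R[i]) z :
  complex.Im (walk_form j c1 c2 c3 c4 z) =
  walk_form j (complex.Im c1) (complex.Im c2) (complex.Im c3) (complex.Im c4) z.
Proof.
by case: c1 c2 c3 c4 => [? ?] [? ?] [? ?] [? ?]; rewrite /walk_form !intr_complex; simpc.
Qed.

Lemma complex_divn (x : R) (n : nat) : (x / n%:R)%:C = x%:C / n%:R.
Proof. by rewrite rmorphM fmorphV /= (rmorph_nat (real_complex R)). Qed.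

Lemma complex_affine_eq0 (c1 c2 : R[i]) (x : R) : c1 * x%:C + c2 = 0 ->
  complex.Re c1 * x + complex.Re c2 = 0 /\ complex.Im c1 * x + complex.Im c2 = 0.
Proof. by case: c1 c2 => [? ?] [? ?]; simpc => -[-> ->]. Qed.

End ComplexParts.

Lemma bool_level_sets (R : realType) d (T : measurableType d) (P : probability T R)
    (A : T -> bool) p x :
  measurable [set w | A w] -> P [set w | A w] = p%:E ->
  measurable [set w | nat_of_bool (A w) = x] /\
  fine (P [set w | nat_of_bool (A w) = x]) = bit_pmf p x.
Proof.
move=> mA PA; case: x => [|[|x]].
- have -> : [set w | nat_of_bool (A w) = 0%N] = ~` [set w | A w].
    by apply/seteqP; split => w /=; case: (A w).
  by split; [exact: measurableC | rewrite probability_setC // PA].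
- have -> : [set w | nat_of_bool (A w) = 1%N] = [set w | A w].
    by apply/seteqP; split => w /=; case: (A w).
  by rewrite PA.
- have -> : [set w | nat_of_bool (A w) = x.+2] = set0.
    by apply/seteqP; split => w //=; case: (A w).
  by rewrite measure0.
Qed.

Section Model.
Variables (R : realType) (d : measure_display) (T : measurableType d).
Variables (P : probability T R) (p1 p2 : R) (a b : int).
Variables (Xi1 Xi2 : nat -> T -> bool) (U1 U2 : nat -> T -> nat).
Hypothesis Xi1_law : forall n, (2 <= n)%N ->
  measurable [set w | Xi1 n w] /\ P [set w | Xi1 n w] = p1%:E.
Hypothesis Xi2_law : forall n, (2 <= n)%N ->
  measurable [set w | Xi2 n w] /\ P [set w | Xi2 n w] = p2%:E.
Hypothesis U1_law : forall n k, (1 <= n)%N ->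
  measurable [set w | U1 n w = k] /\ P [set w | U1 n w = k] = (unif_pmf n k)%:E.
Hypothesis U2_law : forall n k, (1 <= n)%N ->
  measurable [set w | U2 n w = k] /\ P [set w | U2 n w = k] = (unif_pmf n k)%:E.
Hypothesis drivers_indep : mutually_independent_nat P elValid (elFam Xi1 Xi2 U1 U2).

Local Notation Y := (elFam Xi1 Xi2 U1 U2).
Local Notation pY := (pmf_of P Y).
Local Notation Xs := (Xs a b Xi1 Xi2 U1 U2).
Local Notation decode := (decode_walk a b).

Lemma measurable_elFam i x : elValid i -> measurable [set w | Y i w = x].
Proof.
case: i => [[] n|[] n] /= n_valid.
- by have [mA PA] := Xi2_law n_valid; case: (bool_level_sets x mA PA).
- by have [mA PA] := Xi1_law n_valid; case: (bool_level_sets x mA PA).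
- by case: (U2_law x n_valid).
- by case: (U1_law x n_valid).
Qed.

Lemma pmf_XiI c n x : (2 <= n)%N -> pY (XiI c n) x = bit_pmf (if c then p2 else p1) x.
Proof.
case: c => /= n2.
- by have [mA PA] := Xi2_law n2; case: (bool_level_sets x mA PA).
- by have [mA PA] := Xi1_law n2; case: (bool_level_sets x mA PA).
Qed.

Lemma pmf_UI c n x : (1 <= n)%N -> pY (UI c n) x = unif_pmf n x.
Proof. by case: c => /= n1; rewrite /pmf_of ?(U2_law x n1).2 ?(U1_law x n1).2. Qed.

Lemma nth_Yseq_drivers j k c w : (k < j)%N -> (c < 4)%N ->
  nth 0%N (Yseq Y (drivers_upto j) w) (4 * k + c) =
  Y (nth (XiI false 0) (step_drivers k) c) w.
Proof.
move=> kj c4; rewrite (nth_map (XiI false 0)) ?nth_drivers_upto //.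
by rewrite size_drivers_upto; lia.
Qed.

Lemma Xs_decode j m w : (m <= j.+1)%N ->
  Xs m w = decode m (Yseq Y (drivers_upto j) w).
Proof.
move=> mj; apply: eq_walk.
- move=> [|[|k]] // k_range /=; rewrite !subSS !subn0 -{1}[(4 * k)%N]addn0.
  by rewrite !nth_Yseq_drivers /=; try lia.
- move=> [|k] // k_range /=; rewrite !subSS !subn0.
  by rewrite !nth_Yseq_drivers //; lia.
Qed.

Lemma S1_path_sum n M w : (n <= M)%N ->
  S1 a b Xi1 Xi2 U1 U2 n w = path_sum fst (Xs M w) n.
Proof.
move=> nM; apply: eq_big_nat => k /andP[k1 kn].
by rewrite /X1 (@nth_walk _ _ _ _ _ _ k M) //; lia.
Qed.

Lemma S2_path_sum n M w : (n <= M)%N ->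
  S2 a b Xi1 Xi2 U1 U2 n w = path_sum snd (Xs M w) n.
Proof.
move=> nM; apply: eq_big_nat => k /andP[k1 kn].
by rewrite /X2 (@nth_walk _ _ _ _ _ _ k M) //; lia.
Qed.

Lemma sum_pmf_XiI c n N (f : nat -> R) : (2 <= n)%N -> (2 <= N)%N ->
  \sum_(x < N) pY (XiI c n) x * f x =
  (1 - (if c then p2 else p1)) * f 0%N + (if c then p2 else p1) * f 1%N.
Proof. by move=> n2 N2; under eq_bigr do rewrite pmf_XiI //; apply: sum_bit_pmf. Qed.

Lemma sum_pmf_UI c n N (f : nat -> R) : (1 <= n < N)%N ->
  \sum_(x < N) pY (UI c n) x * f x = n%:R^-1 * \sum_(1 <= x < n.+1) f x.
Proof.
by case/andP=> n1 nN; under eq_bigr do rewrite pmf_UI //; apply: sum_unif_pmf; rewrite n1.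
Qed.

Lemma pmf_sum1 j i : i \in drivers_upto j -> \sum_(x < j.+1) pY i x = 1.
Proof.
move/mem_drivers_upto; case: i => [c n|c n] /andP[n_ge n_le].
- have := sum_pmf_XiI c (fun=> 1) n_ge (leq_trans n_ge n_le).
  by rewrite !mulr1 subrK => <-; apply: eq_bigr => x _; rewrite mulr1.
- have := @sum_pmf_UI c n j.+1 (fun=> 1); rewrite n_ge ltnS n_le => /(_ isT).
  rewrite sumr_const_nat subSS subn0 mulVf ?pnatr_eq0 -?lt0n // => <-.
  by apply: eq_bigr => x _; rewrite mulr1.
Qed.

Lemma integral_drivers j (G : seq nat -> R) :
  (\int[P]_w (G (Yseq Y (drivers_upto j) w))%:E)%E =
  (iter_expect pY j.+1 (drivers_upto j) G)%:E.
Proof.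
exact (integral_Yseq measurable_elFam drivers_indep (uniq_drivers_upto _)
  (@valid_drivers_upto _) (@pmf_sum1 _) G).
Qed.

Lemma expect_step_walk_form j s1 (e1 e2 e3 e4 : R) : size s1 = (4 * j)%N ->
  let z := decode j.+1 s1 in
  iter_expect pY j.+2 (step_drivers j)
    (fun s2 => walk_form j.+1 e1 e2 e3 e4 (decode j.+2 (s1 ++ s2))) =
  (path_sum snd z j.+1)%:~R * (e1 * (alpha p1 / j.+1%:R) + e4)
  + (path_sum fst z j.+1)%:~R * (e2 * (alpha p2 / j.+1%:R) + e3).
Proof.
move=> s1j z; have size_z : size z = j.+1 by rewrite size_walk.
pose f (x : nat) : R := (sgnb (x == 1%N))%:~R.
pose g1 (x : nat) : R := ((nth (0, 0) z x.-1).1)%:~R.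
pose g2 (x : nat) : R := ((nth (0, 0) z x.-1).2)%:~R.
pose C := e3 * (path_sum fst z j.+1)%:~R + e4 * (path_sum snd z j.+1)%:~R.
(* X1_(j+2) = f(xi1) g2(u2) and X2_(j+2) = f(xi2) g1(u1). *)
rewrite (eq_iter_expect _ _ (G' := fun s2 => e1 * (f (nth 0 s2 0) * g2 (nth 0 s2 3))
   + e2 * (f (nth 0 s2 1) * g1 (nth 0 s2 2)) + C)); last first.
  move=> [|x1 [|x2 [|x3 [|x4 [|? ?]]]]] // _.
  rewrite decode_walk_step // -/z /walk_form nth_rcons size_z ltnn eqxx /=.
  by rewrite !path_sum_rcons ?size_z // !intrM /C addrA.
have pmf1 i : i \in step_drivers j -> \sum_(x < j.+2) pY i x = 1.
  by move=> ij; apply: pmf_sum1; rewrite /= mem_cat ij orbT.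
rewrite /= sum4_pmf_products; try by apply: pmf1; rewrite !inE eqxx ?orbT.
rewrite !sum_pmf_XiI // !sum_pmf_UI ?ltnSn //.
have -> : \sum_(1 <= x < j.+2) g1 x = (path_sum fst z j.+1)%:~R by rewrite rmorph_sum.
have -> : \sum_(1 <= x < j.+2) g2 x = (path_sum snd z j.+1)%:~R by rewrite rmorph_sum.
by rewrite /f /= rmorphN1 rmorph1 /C /alpha; ring.
Qed.

Lemma integral_walk_form_preimage j B (e1 e2 e3 e4 : R) :
  e1 * (alpha p1 / j.+1%:R) + e4 = 0 -> e2 * (alpha p2 / j.+1%:R) + e3 = 0 ->
  (\int[P]_(w in Xs j.+1 @^-1` B) (walk_form j.+1 e1 e2 e3 e4 (Xs j.+2 w))%:E = 0)%E.
Proof.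
move=> e14 e23.
pose G s :=
  if decode j.+1 s \in B then walk_form j.+1 e1 e2 e3 e4 (decode j.+2 s) else 0.
rewrite integral_mkcond.
transitivity (\int[P]_w (G (Yseq Y (drivers_upto j.+1) w))%:E)%E.
  apply: eq_integral => w _; rewrite /patch /G -!Xs_decode //.
  have -> : (w \in Xs j.+1 @^-1` B) = (Xs j.+1 w \in B).
    by apply/idP/idP => /set_mem h; apply/mem_set.
  by case: ifP.
rewrite integral_drivers [drivers_upto _]/= iter_expect_cat.
rewrite (eq_iter_expect _ _ (G' := fun _ => 0)) ?iter_expect0 // => s1.
rewrite size_drivers_upto => s1j.
have [zB|zNB] := boolP (decode j.+1 s1 \in B).
  rewrite (eq_iter_expect _ _ (G' := fun s2 =>
    walk_form j.+1 e1 e2 e3 e4 (decode j.+2 (s1 ++ s2)))).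
    by rewrite expect_step_walk_form // e14 e23 !mulr0 addr0.
  by move=> s2 _; rewrite /G decode_walk_cat // zB.
rewrite (eq_iter_expect _ _ (G' := fun _ => 0)) ?iter_expect0 // => s2 _.
by rewrite /G decode_walk_cat // (negbTE zNB).
Qed.

Lemma integrable_walk_form j (e1 e2 e3 e4 : R) :
  P.-integrable setT (fun w => (walk_form j e1 e2 e3 e4 (Xs j.+1 w))%:E).
Proof.
pose G s := walk_form j e1 e2 e3 e4 (decode j.+1 s).
have -> : (fun w => (walk_form j e1 e2 e3 e4 (Xs j.+1 w))%:E) =
    EFin \o (G \o Yseq Y (drivers_upto j)).
  by apply/funext => w; rewrite /= /G -Xs_decode.
apply/integrableP; split.
  exact (measurable_fun_Yseq measurable_elFam (@valid_drivers_upto j) G).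
by rewrite (integral_drivers j (fun s => `|G s|)) ltry.
Qed.

Lemma mds_from1_walk_form (eps : nat -> T -> R[i]) (c1 c2 c3 c4 : nat -> R[i]) :
  (forall j w, (1 <= j)%N -> eps j.+1 w =
     c1 j * (X1 a b Xi1 Xi2 U1 U2 j.+1 w)%:~R + c2 j * (X2 a b Xi1 Xi2 U1 U2 j.+1 w)%:~R
     + c3 j * (S1 a b Xi1 Xi2 U1 U2 j w)%:~R + c4 j * (S2 a b Xi1 Xi2 U1 U2 j w)%:~R) ->
  (forall j, (1 <= j)%N -> c1 j * (alpha p1 / j%:R)%:C + c4 j = 0) ->
  (forall j, (1 <= j)%N -> c2 j * (alpha p2 / j%:R)%:C + c3 j = 0) ->
  mds_from1 P (filtr a b Xi1 Xi2 U1 U2) eps.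
Proof.
move=> eps_form c14 c23 [//|j] _.
set k1 := c1 j.+1; set k2 := c2 j.+1; set k3 := c3 j.+1; set k4 := c4 j.+1.
have epsE w : eps j.+2 w = walk_form j.+1 k1 k2 k3 k4 (Xs j.+2 w).
  by rewrite eps_form // (S1_path_sum _ (leqnSn _)) (S2_path_sum _ (leqnSn _)).
have part (f : R[i] -> R) :
    (forall z, f (walk_form j.+1 k1 k2 k3 k4 z) =
               walk_form j.+1 (f k1) (f k2) (f k3) (f k4) z) ->
    f k1 * (alpha p1 / j.+1%:R) + f k4 = 0 ->
    f k2 * (alpha p2 / j.+1%:R) + f k3 = 0 ->
    [/\ forall B : set R, filtr a b Xi1 Xi2 U1 U2 j.+2 [set w | f (eps j.+2 w) \in B],
        P.-integrable setT (fun w => (f (eps j.+2 w))%:E)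
      & forall A, filtr a b Xi1 Xi2 U1 U2 j.+1 A ->
          (\int[P]_(w in A) (f (eps j.+2 w))%:E = 0)%E].
  move=> f_form f14 f23; split.
  - move=> B; exists [set z | f (walk_form j.+1 k1 k2 k3 k4 z) \in B].
    by apply/funext => w /=; rewrite epsE.
  - have -> : (fun w => (f (eps j.+2 w))%:E) = fun w =>
        (walk_form j.+1 (f k1) (f k2) (f k3) (f k4) (Xs j.+2 w))%:E.
      by apply/funext => w; rewrite epsE f_form.
    exact: integrable_walk_form.
  - move=> A [B ->]; under eq_integral do rewrite epsE f_form.
    exact: integral_walk_form_preimage.
have [re14 im14] := complex_affine_eq0 (c14 j.+1 isT).
have [re23 im23] := complex_affine_eq0 (c23 j.+1 isT).
have [Re_meas Re_int Re_0] := part _ (Re_walk_form j.+1 k1 k2 k3 k4) re14 re23.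
have [Im_meas Im_int Im_0] := part _ (Im_walk_form j.+1 k1 k2 k3 k4) im14 im23.
split.
- by move=> B _; split; [exact (Re_meas B) | exact (Im_meas B)].
- exact: Re_int.
- exact: Im_int.
- by move=> A FA; split; [exact: Re_0 | exact: Im_0].
Qed.

Section Increments.
Variables (lam r : R[i]).
Hypothesis lamr : lam * r = (alpha p1)%:C.
Hypothesis ra2 : r * (alpha p2)%:C = lam.

Lemma mds_from1_epsx : mds_from1 P (filtr a b Xi1 Xi2 U1 U2) (epsx a b Xi1 Xi2 U1 U2 lam r).
Proof.
apply: (mds_from1_walk_form (c1 := fun=> (1 + lam)^-1) (c2 := fun=> - r * (1 + lam)^-1)
  (c3 := fun j => lam * (1 + lam)^-1 * j%:R^-1)
  (c4 := fun j => - (lam * r) * (1 + lam)^-1 * j%:R^-1)).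
- by move=> j w _; rewrite /epsx /xn /=; ring.
- by move=> j _; rewrite complex_divn -lamr; ring.
- by move=> j _; rewrite complex_divn -ra2; ring.
Qed.

Lemma mds_from1_epsy : mds_from1 P (filtr a b Xi1 Xi2 U1 U2) (epsy a b Xi1 Xi2 U1 U2 lam r).
Proof.
apply: (mds_from1_walk_form (c1 := fun=> (1 - lam)^-1) (c2 := fun=> r * (1 - lam)^-1)
  (c3 := fun j => - lam * (1 - lam)^-1 * j%:R^-1)
  (c4 := fun j => - (lam * r) * (1 - lam)^-1 * j%:R^-1)).
- by move=> j w _; rewrite /epsy /yn /=; ring.
- by move=> j _; rewrite complex_divn -lamr; ring.
- by move=> j _; rewrite complex_divn -ra2; ring.
Qed.

End Increments.

End Model.

Theorem lemma3p1 (R : realType) (d : measure_display) (T : measurableType d)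
  (P : probability T R) (p1 p2 : R) (a b : int)
  (Xi1 Xi2 : nat -> T -> bool) (U1 U2 : nat -> T -> nat) :
  0 <= p1 <= 1 -> 0 <= p2 <= 1 ->
  (a = 1 \/ a = -1) -> (b = 1 \/ b = -1) ->
  (* laws of the driving variables *)
  (forall n, (2 <= n)%N ->
     measurable [set w | Xi1 n w] /\ P [set w | Xi1 n w] = p1%:E) ->
  (forall n, (2 <= n)%N ->
     measurable [set w | Xi2 n w] /\ P [set w | Xi2 n w] = p2%:E) ->
  (forall n k, (1 <= n)%N -> measurable [set w | U1 n w = k] /\
     P [set w | U1 n w = k] = (if (1 <= k <= n)%N then n%:R^-1 else 0)%:E) ->
  (forall n k, (1 <= n)%N -> measurable [set w | U2 n w = k] /\
     P [set w | U2 n w = k] = (if (1 <= k <= n)%N then n%:R^-1 else 0)%:E) ->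
  (* mutual independence of all xi^(i)_n (n >= 2) and u^(i)_n (n >= 1) *)
  mutually_independent_nat P elValid (elFam Xi1 Xi2 U1 U2) ->
  (* alpha_1 alpha_2 <> 0 and lambda_alpha <> +-1 *)
  alpha p1 * alpha p2 != 0 ->
  lambda_a (alpha p1) (alpha p2) != 1 ->
  lambda_a (alpha p1) (alpha p2) != -1 ->
  let lam := lambda_a (alpha p1) (alpha p2) in
  let r := r_a (alpha p1) (alpha p2) in
  let x := xn a b Xi1 Xi2 U1 U2 r in
  let y := yn a b Xi1 Xi2 U1 U2 r in
  let ex := epsx a b Xi1 Xi2 U1 U2 lam r in
  let ey := epsy a b Xi1 Xi2 U1 U2 lam r in
  let F := filtr a b Xi1 Xi2 U1 U2 in
  (forall (n : nat) (w : T), (1 <= n)%N ->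
     x n w = bet n lam * (x 1%N w +
        \sum_(1 <= j < n) gam j lam / bet j.+1 lam * ex j.+1 w) /\
     y n w = bet n (- lam) * (y 1%N w +
        \sum_(1 <= j < n) gam j (- lam) / bet j.+1 (- lam) * ey j.+1 w)) /\
  mds_from1 P F ex /\ mds_from1 P F ey.
Proof.
move=> p1_01 p2_01 _ _ Xi1_law Xi2_law U1_law U2_law indep a12 lam_neq1 lam_neqN1.
move=> lam r x y ex ey F.
have a2_neq0 : alpha p2 != 0 by move: a12; rewrite mulf_eq0 negb_or => /andP[].
have a12_le1 : alpha p1 * alpha p2 <= 1.
  by case/andP: p1_01 => *; case/andP: p2_01 => *; rewrite /alpha; nra.
have lam_nat := sqr_le1_neq_natS (lambda_a_sqr _ a2_neq0) a12_le1 lam_neq1.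
have Nlam_nat : forall k, (1 <= k)%N -> - lam != k%:R.
  by apply: (sqr_le1_neq_natS _ a12_le1); rewrite ?sqrrN ?lambda_a_sqr ?eqr_oppLR.
split.
  move=> n w n1; split.
  - apply: (gam_recursion_sol (u := x ^~ w) (e := ex ^~ w)) => // m m1.
    by apply: xn_rec; rewrite // addrC addr_eq0.
  - apply: (gam_recursion_sol (u := y ^~ w) (e := ey ^~ w)) => // m m1.
    by apply: yn_rec; rewrite // subr_eq0 eq_sym.
have [lamr ra2] := (lambda_aMr (alpha p1) a2_neq0, r_aMr (alpha p1) a2_neq0).
split.
  exact: (mds_from1_epsx a b Xi1_law Xi2_law U1_law U2_law indep lamr ra2).
exact: (mds_from1_epsy a b Xi1_law Xi2_law U1_law U2_law indep lamr ra2).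
Qed.
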